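(* For every realization, the balanced oracle $m^{\mathfrak b}=\inf\{m\ge0:b_m^2\le s_m\}$ satisfies \[\|\widehat F^{(m^{\mathfrak b})}-f^*\|_n^2\le 2\|\widehat F^{(m^{\mathfrak o})}-f^*\|_n^2+\Delta(s_{m^{\mathfrak b}})=2\min_{m\ge0}\|\widehat F^{(m)}-f^*\|_n^2+\Delta(s_{m^{\mathfrak b}}),\] where $m^{\mathfrak o}\in\arg\min_{m\ge0}\|\widehat F^{(m)}-f^*\|_n^2$ and $\Delta(s_m)=s_m-s_{m-1}$ (with $s_{-1}:=0$).
   Context: Let $Y=f^*+\varepsilon\in\mathbb R^n$ with $f^*,\varepsilon\in\mathbb R^n$, and let $\mathbf X\in\mathbb R^{n\times p}$ have rank $n$ with columns $X^{(j)}$. $\langle a,b\rangle_n=n^{-1}\sum_ia_ib_i$, $\|\cdot\|_n$ its norm. $\widehat\Pi_J$: $\langle\cdot,\cdot\rangle_n$-orthogonal projection onto $\mathrm{span}\{X^{(j)}:j\in J\}$. OMP: $\widehat F^{(0)}=0,\widehat J_0=\emptyset$, $\widehat j_{m+1}\in\arg\max_j|\langle Y-\widehat F^{(m)},X^{(j)}/\|X^{(j)}\|_n\rangle_n|$, $\widehat J_{m+1}=\widehat J_m\cup\{\widehat j_{m+1}\}$, $\widehat F^{(m+1)}=\widehat\Pi_{\widehat J_{m+1}}Y$; $\widehat\Pi_m=\widehat\Pi_{\widehat J_m}$, $b_m^2=\|(I-\widehat\Pi_m)f^*\|_n^2$, $s_m=\|\widehat\Pi_m\varepsilon\|_n^2$,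 so that $\|\widehat F^{(m)}-f^*\|_n^2=b_m^2+s_m$. *)

From HB Require Import structures.
From mathcomp Require Import all_boot all_order all_algebra.
From mathcomp Require Import reals.
Set Implicit Arguments. Unset Strict Implicit. Unset Printing Implicit Defensive.
Import Order.TTheory GRing.Theory Num.Theory.
Local Open Scope ring_scope.

Section OMP.
Variables (R : realType) (n p : nat).

Definition ipn (a b : 'cV[R]_n) : R := n%:R^-1 * \sum_(i < n) a i 0 * b i 0.

Definition nrm2 (a : 'cV[R]_n) : R := ipn a a.

Definition nrm (a : 'cV[R]_n) : R := Num.sqrt (nrm2 a).

Definition is_proj (X : 'M[R]_(n, p)) (J : {set 'I_p}) (a v : 'cV[R]_n) : Prop :=
  (exists c : 'I_p -> R, v = \sum_(j in J) c j *: col j X) /\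
  (forall j, j \in J -> ipn (a - v) (col j X) = 0).

Definition ncol (X : 'M[R]_(n, p)) (j : 'I_p) : 'cV[R]_n := (nrm (col j X))^-1 *: col j X.

(* (J, Pi) is an OMP run on data (X, Y): Pi m is the projection onto
   span{X^(j) : j in J m} (so F^(m) = Pi m Y), J 0 = empty, and J (m+1)
   adds a maximiser of |<Y - F^(m), X^(j)/||X^(j)||_n>_n|. *)
Definition omp_run (X : 'M[R]_(n, p)) (Y : 'cV[R]_n)
    (J : nat -> {set 'I_p}) (Pi : nat -> 'cV[R]_n -> 'cV[R]_n) : Prop :=
  [/\ J 0%N = set0,
      (forall m a, is_proj X (J m) a (Pi m a)) &
      (forall m, exists j : 'I_p,
          (forall k : 'I_p, `|ipn (Y - Pi m Y) (ncol X k)| <= `|ipn (Y - Pi m Y) (ncol X j)|)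
          /\ J m.+1 = j |: J m)].

End OMP.

(** The risk of the m-th iterate splits as [b_m^2 + s_m], where the bias
    [b_m^2] is nonincreasing and the variance [s_m] nondecreasing in [m],
    since the selected column sets are nested.  If [m^b <= m^o], then
    [b_{m^b}^2 <= s_{m^b} <= s_{m^o}], so the risk at [m^b] is at most
    [2 s_{m^o}], and [Delta(s_{m^b}) >= 0].  If [m^o < m^b = k + 1], then
    minimality of [m^b] gives [s_k < b_k^2 <= b_{m^o}^2], and
    [b_{k+1}^2 + s_{k+1} = b_{k+1}^2 + s_k + Delta(s_{k+1})
     <= 2 b_{m^o}^2 + Delta(s_{k+1})]. *)

From mathcomp Require Import all_boot all_order all_algebra.
From mathcomp Require Import reals.
From mathcomp Require Import lra.
Import Order.TTheory GRing.Theory Num.Theory.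
Local Open Scope ring_scope.
Set Implicit Arguments. Unset Strict Implicit.

Section BalancedStop.
Variables (R : realDomainType) (b s : nat -> R).
Hypotheses (b_noninc : {homo b : i j / (i <= j)%N >-> j <= i})
           (s_nondec : {homo s : i j / (i <= j)%N >-> i <= j})
           (b_ge0 : forall m, 0 <= b m) (s_ge0 : forall m, 0 <= s m).

Lemma balanced_stop_bound (mb mo : nat) :
  b mb <= s mb -> (forall m, (m < mb)%N -> s m < b m) ->
  b mb + s mb <= 2 * (b mo + s mo) + (s mb - if mb is k.+1 then s k else 0).
Proof.
move=> bal_mb unbal_lt; have [le_mb_mo | lt_mo_mb] := leqP mb mo.
  have s_mb_le : s mb <= b mo + s mo by rewrite ler_wpDl ?s_nondec.
  have Delta_ge0 : 0 <= s mb - if mb is k.+1 then s k else 0.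
    by case: (mb) => [|k]; rewrite ?subr0 ?subr_ge0 ?s_nondec.
  lra.
case: mb bal_mb unbal_lt lt_mo_mb => // k _ unbal_lt; rewrite ltnS => le_mo_k.
have b_k_le : b k <= b mo + s mo by rewrite ler_wpDr ?b_noninc.
have b_k1_le : b k.+1 <= b k by rewrite b_noninc.
have s_k_lt : s k < b k by rewrite unbal_lt.
lra.
Qed.

End BalancedStop.

Section EmpiricalInnerProduct.
Variables (R : realType) (n : nat).
Implicit Types a b c : 'cV[R]_n.

Lemma ipnC a b : ipn a b = ipn b a.
Proof. by rewrite /ipn; congr (_ * _); apply: eq_bigr => i _; rewrite mulrC. Qed.

Lemma ipnDl a b c : ipn (a + b) c = ipn a c + ipn b c.
Proof.
rewrite /ipn -mulrDr; congr (_ * _); rewrite -big_split /=.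
by apply: eq_bigr => i _; rewrite mxE mulrDl.
Qed.

Lemma ipnZl (k : R) a c : ipn (k *: a) c = k * ipn a c.
Proof.
rewrite /ipn mulrCA; congr (_ * _); rewrite mulr_sumr.
by apply: eq_bigr => i _; rewrite mxE mulrA.
Qed.

Lemma ipn0l c : ipn 0 c = 0.
Proof. by rewrite -(scale0r 0) ipnZl mul0r. Qed.

Lemma ipnBl a b c : ipn (a - b) c = ipn a c - ipn b c.
Proof. by rewrite ipnDl -scaleN1r ipnZl mulN1r. Qed.

Lemma ipnDr a b c : ipn c (a + b) = ipn c a + ipn c b.
Proof. by rewrite ipnC ipnDl ![ipn _ c]ipnC. Qed.

Lemma ipnBr a b c : ipn c (a - b) = ipn c a - ipn c b.
Proof. by rewrite ipnC ipnBl ![ipn _ c]ipnC. Qed.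

Lemma nrm2_ge0 a : 0 <= nrm2 a.
Proof.
rewrite /nrm2 /ipn mulr_ge0 ?invr_ge0 ?ler0n //.
by apply: sumr_ge0 => i _; rewrite -expr2 sqr_ge0.
Qed.

Lemma nrm2_eq0 a : nrm2 a = 0 -> a = 0.
Proof.
case: n a => [|k] a; first by move=> _; apply/matrixP => [[]].
rewrite /nrm2 /ipn => /eqP; rewrite mulf_eq0 invr_eq0 pnatr_eq0 /=.
move=> /eqP/psumr_eq0P sq_eq0; apply/matrixP => i j; rewrite (ord1 j) mxE.
apply/eqP; rewrite -[_ == 0]orbb -mulf_eq0; apply/eqP/sq_eq0 => // l _.
by rewrite -expr2 sqr_ge0.
Qed.

Lemma nrm2D_orth a b : ipn a b = 0 -> nrm2 (a + b) = nrm2 a + nrm2 b.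
Proof. by move=> ab0; rewrite /nrm2 ipnDl !ipnDr [ipn b a]ipnC ab0 addr0 add0r. Qed.

Lemma nrm2B_orth a b : ipn a b = 0 -> nrm2 (a - b) = nrm2 a + nrm2 b.
Proof. by move=> ab0; rewrite /nrm2 ipnBl !ipnBr [ipn b a]ipnC ab0 subr0 sub0r opprK. Qed.

End EmpiricalInnerProduct.

Section Projection.
Variables (R : realType) (n p : nat) (X : 'M[R]_(n, p)).
Implicit Types (K : {set 'I_p}) (a u v w : 'cV[R]_n).

Definition in_span K v := exists c : 'I_p -> R, v = \sum_(j in K) c j *: col j X.

Definition orth_cols K w := forall j, j \in K -> ipn w (col j X) = 0.

Lemma in_spanD K u v : in_span K u -> in_span K v -> in_span K (u + v).
Proof.
move=> [c ->] [d ->]; exists (fun j => c j + d j).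
by rewrite -big_split; apply: eq_bigr => j _; rewrite scalerDl.
Qed.

Lemma in_spanB K u v : in_span K u -> in_span K v -> in_span K (u - v).
Proof.
move=> [c ->] [d ->]; exists (fun j => c j - d j).
by rewrite -sumrB; apply: eq_bigr => j _; rewrite scalerBl.
Qed.

Lemma orth_colsD K u v : orth_cols K u -> orth_cols K v -> orth_cols K (u + v).
Proof. by move=> ou ov j jK; rewrite ipnDl ou // ov // addr0. Qed.

Lemma orth_colsB K u v : orth_cols K u -> orth_cols K v -> orth_cols K (u - v).
Proof. by move=> ou ov j jK; rewrite ipnBl ou // ov // subr0. Qed.

Lemma orth_cols_sub K K' w : K \subset K' -> orth_cols K' w -> orth_cols K w.
Proof. by move=> /subsetP sKK' ow j /sKK'; apply: ow. Qed.

Lemma ipn_span_orth K v w : in_span K v -> orth_cols K w -> ipn v w = 0.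
Proof.
move=> [c ->] ow.
rewrite (big_morph (fun a => ipn a w) (fun a b => ipnDl a b w) (ipn0l w)).
by apply: big1 => j jK; rewrite ipnZl ipnC ow ?mulr0.
Qed.

Lemma is_proj_uniq K a v v' : is_proj X K a v -> is_proj X K a v' -> v = v'.
Proof.
move=> [span_v orth_v] [span_v' orth_v'].
have orth_d : orth_cols K (v - v').
  have -> : v - v' = (a - v') - (a - v) by rewrite opprB [RHS]addrC addrA subrK.
  exact: orth_colsB.
apply/eqP; rewrite -subr_eq0; apply/eqP/nrm2_eq0.
exact: ipn_span_orth (in_spanB span_v span_v') orth_d.
Qed.

Lemma is_projD K a b va vb :
  is_proj X K a va -> is_proj X K b vb -> is_proj X K (a + b) (va + vb).
Proof.
move=> [span_a orth_a] [span_b orth_b]; split; first exact: in_spanD.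
by rewrite opprD addrACA; exact: orth_colsD.
Qed.

Lemma is_proj_bias_variance K f e vf ve v :
  is_proj X K f vf -> is_proj X K e ve -> is_proj X K (f + e) v ->
  nrm2 (v - f) = nrm2 (f - vf) + nrm2 ve.
Proof.
move=> pf pe /(is_proj_uniq (is_projD pf pe)) <-.
have -> : vf + ve - f = ve - (f - vf) by rewrite opprB addrA [ve + vf]addrC.
rewrite [RHS]addrC nrm2B_orth //.
by case: pe => span_e _; case: pf => _ orth_f; exact: ipn_span_orth span_e orth_f.
Qed.

Section Nested.
Variables (K K' : {set 'I_p}) (a v v' : 'cV[R]_n).
Hypotheses (sKK' : K \subset K') (pv : is_proj X K a v) (pv' : is_proj X K' a v').

Lemma nrm2_resid_proj_subset : nrm2 (a - v') <= nrm2 (a - v).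
Proof.
case: pv => span_v _; case: pv' => span_v' orth_v'.
have orth_d : ipn (a - v') (v' - v) = 0.
  rewrite ipnBr ![ipn (a - v') _]ipnC (ipn_span_orth span_v' orth_v').
  by rewrite (ipn_span_orth span_v (orth_cols_sub sKK' orth_v')) subr0.
have -> : a - v = (a - v') + (v' - v) by rewrite addrA subrK.
by rewrite (nrm2D_orth orth_d) lerDl nrm2_ge0.
Qed.

Lemma nrm2_proj_subset : nrm2 v <= nrm2 v'.
Proof.
case: pv => span_v orth_v; case: pv' => _ orth_v'.
have orth_d : orth_cols K (v' - v).
  have -> : v' - v = (a - v) - (a - v') by rewrite opprB [RHS]addrC addrA subrK.
  exact: orth_colsB orth_v (orth_cols_sub sKK' orth_v').
have -> : v' = v + (v' - v) by rewrite addrC subrK.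
by rewrite (nrm2D_orth (ipn_span_orth span_v orth_d)) lerDl nrm2_ge0.
Qed.

End Nested.
End Projection.

Section NestedProjections.
Variables (R : realType) (n p : nat) (X : 'M[R]_(n, p)).
Variables (J : nat -> {set 'I_p}) (Pi : nat -> 'cV[R]_n -> 'cV[R]_n).
Hypotheses (proj : forall m a, is_proj X (J m) a (Pi m a))
           (nested : forall m, J m \subset J m.+1).

Lemma nrm2_resid_nonincreasing a :
  {homo (fun m => nrm2 (a - Pi m a)) : i j / (i <= j)%N >-> j <= i}.
Proof.
apply: homo_leq (fun y x z xy yz => le_trans yz xy) _ => [x|m]; first exact: lexx.
exact: nrm2_resid_proj_subset (nested m) (proj m a) (proj m.+1 a).
Qed.

Lemma nrm2_proj_nondecreasing a :
  {homo (fun m => nrm2 (Pi m a)) : i j / (i <= j)%N >-> i <= j}.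
Proof.
apply: homo_leq lexx le_trans _ => m.
exact: nrm2_proj_subset (nested m) (proj m a) (proj m.+1 a).
Qed.

End NestedProjections.

Lemma omp_run_nested (R : realType) (n p : nat) (X : 'M[R]_(n, p)) Y J Pi :
  omp_run X Y J Pi -> forall m, J m \subset J m.+1.
Proof. by case=> _ _ step m; have [j [_ ->]] := step m; exact: subsetUr. Qed.

Theorem lemma2p1 (R : realType) (n p : nat) (X : 'M[R]_(n, p))
  (fstar eps : 'cV[R]_n)
  (J : nat -> {set 'I_p}) (Pi : nat -> 'cV[R]_n -> 'cV[R]_n) :
  \rank X = n ->
  omp_run X (fstar + eps) J Pi ->
  let b2 := fun m => nrm2 (fstar - Pi m fstar) in
  let s := fun m => nrm2 (Pi m eps) in
  let risk := fun m => nrm2 (Pi m (fstar + eps) - fstar) in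
  let Delta := fun m => s m - (if m is k.+1 then s k else 0) in
  forall mb : nat,
    b2 mb <= s mb ->
    (forall m, (m < mb)%N -> ~ (b2 m <= s m)) ->
  forall mo : nat,
    (forall m, risk mo <= risk m) ->
    risk mb <= 2 * risk mo + Delta mb.
Proof.
move=> _ run b2 s risk Delta mb bal_mb unbal_lt mo _.
have proj := let: And3 _ proj _ := run in proj.
have nested := omp_run_nested run.
have risk_split m : risk m = b2 m + s m.
  exact: is_proj_bias_variance (proj m fstar) (proj m eps) (proj m _).
rewrite !risk_split; apply: balanced_stop_bound => //.
- exact: nrm2_resid_nonincreasing proj nested fstar.
- exact: nrm2_proj_nondecreasing proj nested eps.
- by move=> m; apply: nrm2_ge0.
- by move=> m; apply: nrm2_ge0.
- by move=> m /unbal_lt; rewrite ltNge => /negP.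
Qed.
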